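(* Let $X$, $Y$ be disjoint countable sets of cardinality at least two, and let $M\le\mathrm{Sym}(X)$ and $N\le\mathrm{Sym}(Y)$ be nontrivial closed permutation groups. Then either $|M\boxtimes N|\le\aleph_0$ or $|M\boxtimes N| = 2^{\aleph_0}$, with the former holding if and only if $M$ and $N$ are semi-regular.
   Context: Closed means closed in the permutation topology (pointwise convergence) of $\mathrm{Sym}(X)$, resp. $\mathrm{Sym}(Y)$. A permutation group is semi-regular if all point stabilisers are trivial. Let $T$ be the $(|X|,|Y|)$-biregular tree with natural bipartition $VT=V_X\sqcup V_Y$ (vertices in $V_X$ have valency $|X|$, in $V_Y$ valency $|Y|$). $A(v)$, $\overline{A}(v)$ are the sets of arcs with origin, resp. terminus, $v$. A legal colouring is a map $c:AT\to X\cup Y$ restricting to a bijection $A(v)\to X$ for $v\in V_X$, to a bijection $A(v)\to Y$ for $v\in V_Y$, and constant on each $\overline{A}(v)$. $U_c(M,N)$ is the group of $g\in\mathrm{Aut}(T)$ with $gV_X=V_X$ and $c|_{A(gv)}\circ g|_{A(v)}\circ(c|_{A(v)})^{-1}$ in $M$ for $v\in V_X$ and in $N$ for $v\in V_Y$. The box product $M\boxtimes N\le\mathrm{Sym}(V_Y)$ is the group induced on $V_Y$ by $U_c(M,N)$. *)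

From mathcomp Require Import all_boot.
From mathcomp Require Import boolp classical_sets functions cardinality.
Set Implicit Arguments. Unset Strict Implicit. Unset Printing Implicit Defensive.
Local Open Scope classical_set_scope.

Definition perm_group (X : Type) (M : set (X -> X)) : Prop :=
  [/\ (forall m, M m -> bijective m),
      M id,
      (forall m n, M m -> M n -> M (m \o n)) &
      (forall m mi, M m -> cancel m mi -> cancel mi m -> M mi)].

(* Closed in the permutation topology (pointwise convergence) of Sym(X):
   every permutation f all of whose basic neighbourhoods
   { g | g agrees with f on a finite set s } meet M lies in M. *)
Definition perm_closed (X : eqType) (M : set (X -> X)) : Prop :=
  forall f : X -> X, bijective f ->
    (forall s : seq X, exists2 m, M m & forall x, x \in s -> m x = f x) ->
    M f.

Definition nontrivial_group (X : Type) (M : set (X -> X)) : Prop :=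
  exists2 m, M m & exists x, m x <> x.

Definition semiregular (X : Type) (M : set (X -> X)) : Prop :=
  forall m, M m -> forall x, m x = x -> m = id.

Fixpoint is_walk (V : Type) (adj : V -> V -> Prop) (p : seq V) : Prop :=
  match p with
  | u :: ((v :: _) as q) => adj u v /\ is_walk adj q
  | _ => True
  end.

Fixpoint no_backtrack (V : Type) (p : seq V) : Prop :=
  match p with
  | u :: ((_ :: w :: _) as q) => u <> w /\ no_backtrack q
  | _ => True
  end.

Definition is_tree (V : Type) (adj : V -> V -> Prop) : Prop :=
  [/\ (exists v : V, True),
      (forall u v, adj u v -> adj v u),
      (forall u, ~ adj u u),
      (forall u v, exists p : seq V, is_walk adj (u :: p) /\ last u p = v) &
      (forall (u : V) (p : seq V), is_walk adj (u :: p) -> no_backtrack (u :: p) ->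
          last u p = u -> p = [::])].

(* The (|X|,|Y|)-biregular tree with natural bipartition VT = V_X ⊔ V_Y
   (v ∈ V_X iff inX v), together with a legal colouring c : AT -> X ⊔ Y
   (c u v is the colour of the arc (u,v); it is meaningful only when adj u v).
   The valencies |X|, |Y| are enforced by the bijectivity conditions. *)
Definition legal_coloured_biregular_tree (X Y V : Type)
  (adj : V -> V -> Prop) (inX : V -> bool) (c : V -> V -> X + Y) : Prop :=
  [/\ is_tree adj,
      (forall u v, adj u v -> inX u <> inX v),
      (forall v, inX v ->
         [/\ (forall w, adj v w -> exists x, c v w = inl x),
             (forall w w', adj v w -> adj v w' -> c v w = c v w' -> w = w') &
             (forall x, exists2 w, adj v w & c v w = inl x)]),
      (forall v, ~~ inX v ->
         [/\ (forall w, adj v w -> exists y, c v w = inr y),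
             (forall w w', adj v w -> adj v w' -> c v w = c v w' -> w = w') &
             (forall y, exists2 w, adj v w & c v w = inr y)]) &
      (forall v u u', adj u v -> adj u' v -> c u v = c u' v)].

Definition tree_aut (V : Type) (adj : V -> V -> Prop) (g : V -> V) : Prop :=
  bijective g /\ (forall u v, adj u v <-> adj (g u) (g v)).

(* U_c(M,N): automorphisms g with g V_X = V_X whose local action
   c|A(gv) ∘ g|A(v) ∘ (c|A(v))^-1 lies in M for v ∈ V_X and in N for v ∈ V_Y. *)
Definition U_c (X Y V : Type) (adj : V -> V -> Prop) (inX : V -> bool)
  (c : V -> V -> X + Y) (M : set (X -> X)) (N : set (Y -> Y)) : set (V -> V) :=
  [set g | [/\ tree_aut adj g,
      (forall v, inX (g v) = inX v),
      (forall v, inX v -> exists2 m, M m &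
          forall w x, adj v w -> c v w = inl x -> c (g v) (g w) = inl (m x)) &
      (forall v, ~~ inX v -> exists2 n, N n &
          forall w y, adj v w -> c v w = inr y -> c (g v) (g w) = inr (n y))]].

Definition VY (V : Type) (inX : V -> bool) := {v : V | ~~ inX v}.

Definition box_product (X Y V : Type) (adj : V -> V -> Prop) (inX : V -> bool)
  (c : V -> V -> X + Y) (M : set (X -> X)) (N : set (Y -> Y))
  : set (VY inX -> VY inX) :=
  [set h | exists2 g, U_c adj inX c M N g & forall v : VY inX, sval (h v) = g (sval v)].

Arguments legal_coloured_biregular_tree {X Y V} adj inX c.
Arguments U_c {X Y V} adj inX c M N.
Arguments box_product {X Y V} adj inX c M N.

From mathcomp Require Import all_boot.
From mathcomp Require Import boolp classical_sets functions cardinality.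
Set Implicit Arguments. Unset Strict Implicit. Unset Printing Implicit Defensive.
Local Open Scope classical_set_scope.
Local Open Scope card_scope.

(* Fix a vertex v0 in V_X.  Every vertex is the endpoint of a unique
   non-backtracking walk from v0, so it is determined by the reduced word of
   colours read along that walk; in particular V is countable, and an element of
   M ⊠ N can be coded by its graph, a set of naturals.

   If M and N are semi-regular, the local action of an element of U_c(M,N) at a
   vertex is determined by the image of a single arc, so two elements agreeing
   on an edge agree on its neighbours and, by connectedness, everywhere: M ⊠ N
   injects into V × V and is countable.

   Otherwise, say m ∈ M fixes x0 and moves x1 (the case of N is symmetric, by
   exchanging the roles of X and Y).  For bb : nat -> bool, rewrite every
   address by applying m or id to its X-colours, according to a switch that
   may change only across x0-coloured arcs, which m fixes, and that is set to
   bb j after an x0-coloured arc leaving depth 2j.  This is an element of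
   U_c(M,N), and different bb act differently on V_Y, so that |M ⊠ N| = 2^ℵ0
   by Cantor-Bernstein; then M ⊠ N is not countable, by Cantor's diagonal
   argument. *)

Section Walks.
Variables (V : Type) (adj : V -> V -> Prop).

Lemma is_walk_cat (s : seq V) x t :
  is_walk adj (rcons s x) -> is_walk adj (x :: t) -> is_walk adj (s ++ x :: t).
Proof.
elim: s => [|a [|b s] IH] //=; first by case=> ab _ xt; split.
by case=> ab bsx xt; split => //; apply: IH.
Qed.

Lemma no_backtrack_cat (s : seq V) x t :
  no_backtrack (rcons s x) -> no_backtrack (x :: t) ->
  [\/ s = [::], t = [::] | last x s <> head x t] ->
  no_backtrack (s ++ x :: t).
Proof.
elim: s => [|a [|b [|d s]] IH] //=.
- by move=> _; case: t {IH} => [|y t] //= xt [|//|].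
- by case=> ax _ xt turn; split => //; apply: IH => //; case: turn => [|->|]; constructor.
- by case=> ab bsx xt turn; split => //; apply: IH => //; case: turn => [|->|]; constructor.
Qed.

End Walks.

Lemma semiregular_eq (Z : Type) (K : set (Z -> Z)) (k k' : Z -> Z) z :
  perm_group K -> semiregular K -> K k -> K k' -> k z = k' z -> k = k'.
Proof.
move=> [bijK _ compK invK] SK Kk Kk' E; have [ki kK kiK] := bijK k' Kk'.
have /SK fix_z : (ki \o k) z = z by rewrite /= E kK.
apply/funext => y; rewrite -[k y]kiK.
by move: (fix_z (compK _ _ (invK _ _ Kk' kK kiK) Kk)) => /(congr1 (@^~ y)) /= ->.
Qed.

Section LegalTree.
Variables (X Y : countType) (V : Type) (adj : V -> V -> Prop) (inX : V -> bool)
  (c : V -> V -> X + Y).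
Hypothesis legal : legal_coloured_biregular_tree adj inX c.

Lemma tree_nonempty : exists v : V, True.
Proof. by case: legal => -[]. Qed.

Lemma adj_sym u v : adj u v -> adj v u.
Proof. by case: legal => -[_ sym _ _ _] _ _ _ _; apply: sym. Qed.

Lemma tree_connected u v : exists p, is_walk adj (u :: p) /\ last u p = v.
Proof. by case: legal => -[_ _ _ conn _] _ _ _ _; apply: conn. Qed.

Lemma tree_no_cycle u p : is_walk adj (u :: p) -> no_backtrack (u :: p) ->
  last u p = u -> p = [::].
Proof. by case: legal => -[_ _ _ _ acyc] _ _ _ _; apply: acyc. Qed.

Lemma adj_inX_neq u v : adj u v -> inX u <> inX v.
Proof. by case: legal => _ bip _ _ _; apply: bip. Qed.

Lemma colour_inl v w : inX v -> adj v w -> exists x, c v w = inl x.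
Proof. by case: legal => _ _ HX _ _ /HX[col _ _] /col. Qed.

Lemma colour_inr v w : ~~ inX v -> adj v w -> exists y, c v w = inr y.
Proof. by case: legal => _ _ _ HY _ /HY[col _ _] /col. Qed.

Lemma arc_inl v x : inX v -> exists2 w, adj v w & c v w = inl x.
Proof. by case: legal => _ _ HX _ _ /HX[]. Qed.

Lemma arc_inr v y : ~~ inX v -> exists2 w, adj v w & c v w = inr y.
Proof. by case: legal => _ _ _ HY _ /HY[]. Qed.

Lemma colour_inj v w w' : adj v w -> adj v w' -> c v w = c v w' -> w = w'.
Proof.
by case: legal => _ _ HX HY _; case: (boolP (inX v)) => [/HX|/HY] [_ inj _]; apply: inj.
Qed.

Lemma colour_into_const v u u' : adj u v -> adj u' v -> c u v = c u' v.
Proof. by case: legal => _ _ _ _ const; apply: const. Qed.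

Lemma is_inl_colour v w : adj v w -> is_inl (c v w) = inX v.
Proof.
case: (boolP (inX v)) => vX vw; first by have [x ->] := colour_inl vX vw.
by have [y ->] := colour_inr vX vw.
Qed.

Lemma arc_colour v a : is_inl a = inX v -> exists2 w, adj v w & c v w = a.
Proof.
case: a => [x|y] /= side; first exact: arc_inl.
by apply: arc_inr; rewrite -side.
Qed.

Section Addresses.
Variables (v0 : V) (lam0 : X + Y).
Hypotheses (v0X : inX v0) (lam0P : forall u, adj u v0 -> c u v0 = lam0).

Definition nbr (u : V) (a : X + Y) : V :=
  if pselect (exists2 w, adj u w & c u w = a) is left H then s2val (cid2 H) else u.

Lemma nbrP u a : is_inl a = inX u -> adj u (nbr u a) /\ c u (nbr u a) = a.
Proof.
move=> /arc_colour ex; rewrite /nbr; case: pselect => // H.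
by case: (cid2 H).
Qed.

(* The address of a vertex is the sequence of colours read along the geodesic
   from [v0], most recent colour first; [lam0] stands for the colour of the
   arc entering the root.  In a reduced word the colours alternate between X
   and Y, and no arc leads back to the vertex two steps behind, since every arc
   into [vertex_at r''] has colour [in_colour r'']. *)
Fixpoint vertex_at (r : seq (X + Y)) : V :=
  if r is a :: r' then nbr (vertex_at r') a else v0.

Definition in_colour (r : seq (X + Y)) : X + Y := if r is a :: _ then a else lam0.

Fixpoint reduced (r : seq (X + Y)) : Prop :=
  match r with
  | [::] => True
  | a :: r' => [/\ reduced r', is_inl a = ~~ odd (size r') &
                 if r' is _ :: r'' then a <> in_colour r'' else True]
  end.

Lemma reduced_behead a r : reduced (a :: r) -> reduced r.
Proof. by case. Qed.

Lemma inX_vertex_at r : reduced r -> inX (vertex_at r) = ~~ odd (size r).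
Proof.
elim: r => [|a r IH] /=; first by rewrite v0X.
case=> /IH side ia _; have [adj_a _] := nbrP (etrans ia (esym side)).
by move: (adj_inX_neq adj_a); rewrite side; case: odd; case: inX.
Qed.

Lemma vertex_at_cons a r : reduced (a :: r) ->
  adj (vertex_at r) (vertex_at (a :: r)) /\ c (vertex_at r) (vertex_at (a :: r)) = a.
Proof. by case=> red_r ia _; apply: nbrP; rewrite ia inX_vertex_at. Qed.

Lemma colour_into_vertex_at r z : reduced r -> adj z (vertex_at r) ->
  c z (vertex_at r) = in_colour r.
Proof.
case: r => [|a r] red_r; first exact: lam0P.
have [par col] := vertex_at_cons red_r.
by move=> /colour_into_const /(_ par) ->.
Qed.

Lemma vertex_at_nonbacktracking a b r : reduced (a :: b :: r) ->
  vertex_at (a :: b :: r) <> vertex_at r.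
Proof.
move=> red_abr E; have [_ col] := vertex_at_cons red_abr.
have [par _] := vertex_at_cons (reduced_behead red_abr).
have := colour_into_vertex_at (reduced_behead (reduced_behead red_abr)) (adj_sym par).
by case: red_abr => _ _; rewrite -E col.
Qed.

Fixpoint path_to_root r := if r is _ :: r' then vertex_at r :: path_to_root r' else [:: v0].
Fixpoint path_from_root r :=
  if r is _ :: r' then rcons (path_from_root r') (vertex_at r) else [:: v0].

Lemma path_to_rootE r : exists t, path_to_root r = vertex_at r :: t.
Proof. by case: r => [|a r] /=; eexists. Qed.

Lemma last_path_to_root r d : last d (path_to_root r) = v0.
Proof. by elim: r d => [|a r IH] d //=. Qed.

Lemma path_from_rootE r : exists t, path_from_root r = v0 :: t.
Proof. by elim: r => [|a r [t /= ->]]; eexists. Qed.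

Lemma last_path_from_root r d : last d (path_from_root r) = vertex_at r.
Proof. by case: r => [|a r] //=; rewrite last_rcons. Qed.

Lemma path_to_root_geodesic r : reduced r ->
  is_walk adj (path_to_root r) /\ no_backtrack (path_to_root r).
Proof.
elim: r => [|a r IH] //= red_ar; have [walk nb] := IH (reduced_behead red_ar).
have [par _] := vertex_at_cons red_ar.
have [t Et] := path_to_rootE r; rewrite Et in walk nb *.
split; first by split => //; apply: adj_sym.
case: r red_ar Et {IH par walk} nb => [|b r] red_ar /=; first by case: t.
have [t' ->] := path_to_rootE r; case=> <- nb; split => //.
exact: vertex_at_nonbacktracking.
Qed.

Lemma path_from_root_geodesic r : reduced r ->
  is_walk adj (path_from_root r) /\ no_backtrack (path_from_root r).
Proof.
elim: r => [|a r IH] //= red_ar; have [walk nb] := IH (reduced_behead red_ar).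
have [par _] := vertex_at_cons red_ar.
case: r red_ar {IH} walk nb par => [|b r] red_ar walk nb par //=.
rewrite -!cats1 -catA; split; first by apply: is_walk_cat.
apply: no_backtrack_cat => //; constructor 3.
by rewrite last_path_from_root; apply/nesym/vertex_at_nonbacktracking.
Qed.

Lemma vertex_at_cons_neq_root a r : reduced (a :: r) -> vertex_at (a :: r) <> v0.
Proof.
move=> red_ar E; have [t Et] := path_to_rootE r.
have [walk nb] : is_walk adj (v0 :: path_to_root r) /\ no_backtrack (v0 :: path_to_root r).
  by rewrite -E; exact: path_to_root_geodesic red_ar.
by have := tree_no_cycle walk nb (last_path_to_root r v0); rewrite Et.
Qed.

(* Two distinct addresses of one vertex would glue to a closed reduced walk. *)
Lemma vertex_at_inj r r' : reduced r -> reduced r' -> vertex_at r = vertex_at r' -> r = r'.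
Proof.
elim: r r' => [|a s IH] [|a' s'] //.
- by move=> _ /vertex_at_cons_neq_root nv /esym.
- by move=> /vertex_at_cons_neq_root.
move=> red_as red_as' E.
case: (pselect (vertex_at s = vertex_at s')) => [Es|Ds].
  have [_ col] := vertex_at_cons red_as; have [_ col'] := vertex_at_cons red_as'.
  by rewrite E Es col' in col; rewrite col (IH s' (reduced_behead red_as) (reduced_behead red_as')).
exfalso; have [P EP] := path_from_rootE s.
have [walk1 nb1] := path_from_root_geodesic red_as.
have [walk2 nb2] : is_walk adj (vertex_at (a :: s) :: path_to_root s') /\
                   no_backtrack (vertex_at (a :: s) :: path_to_root s').
  by rewrite E; exact: path_to_root_geodesic red_as'.
have walk := is_walk_cat (s := path_from_root s) walk1 walk2.
have nb := no_backtrack_cat (s := path_from_root s) nb1 nb2.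
rewrite EP /= in walk nb.
have lastP : last v0 P = vertex_at s by rewrite -(last_path_from_root s v0) EP.
have turn : [\/ v0 :: P = [::], path_to_root s' = [::]
                | last v0 P <> head (vertex_at (a :: s)) (path_to_root s')].
  by constructor 3; rewrite lastP; have [t' ->] := path_to_rootE s'.
have := tree_no_cycle walk (nb turn).
by rewrite last_cat /= last_path_to_root => /(_ erefl); case: P {EP walk nb turn lastP}.
Qed.

Lemma vertex_at_step r z : reduced r -> adj (vertex_at r) z ->
  (exists b r', r = b :: r' /\ z = vertex_at r') \/
  (reduced (c (vertex_at r) z :: r) /\ vertex_at (c (vertex_at r) z :: r) = z).
Proof.
move=> red_r rz.
have [ra cola] := nbrP (is_inl_colour rz).
have Ez := colour_inj ra rz cola.
have side : is_inl (c (vertex_at r) z) = ~~ odd (size r).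
  by rewrite is_inl_colour // inX_vertex_at.
case: r red_r rz ra cola Ez side => [|b r] red_r rz _ _ Ez side; first by right.
case: (pselect (z = vertex_at r)) => [->|Dz]; first by left; exists b, r.
right; split => //; split => // E; apply: Dz.
have [par _] := vertex_at_cons red_r.
apply: colour_inj rz (adj_sym par) _.
by rewrite E (colour_into_vertex_at (reduced_behead red_r) (adj_sym par)).
Qed.

Lemma exists_address v : exists2 r, reduced r & vertex_at r = v.
Proof.
have [p [walk <-]] := tree_connected v0 v.
have : exists2 r, reduced r & vertex_at r = v0 by exists [::].
elim: p v0 walk => [|z p IH] u //= [uz walk] [r red_r Er]; apply: IH => //.
subst u; case: (vertex_at_step red_r uz) => [[b [r' [Er ->]]]|[red_zr Ez]].
  by exists r' => //; move: red_r; rewrite Er => /reduced_behead.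
by exists (c (vertex_at r) z :: r).
Qed.

Definition address v : seq (X + Y) := s2val (cid2 (exists_address v)).

Lemma address_reduced v : reduced (address v).
Proof. by rewrite /address; case: cid2. Qed.

Lemma addressK v : vertex_at (address v) = v.
Proof. by rewrite /address; case: cid2. Qed.

Lemma vertex_atK r : reduced r -> address (vertex_at r) = r.
Proof. by move=> red_r; apply: vertex_at_inj; rewrite ?addressK //; apply: address_reduced. Qed.

Lemma address_adj u v : adj u v ->
  address v = c u v :: address u \/ address u = c v u :: address v.
Proof.
move=> uv; have := vertex_at_step (address_reduced u); rewrite addressK => /(_ _ uv).
case=> [[b [r [Eu Ev]]]|[red_vu Ev]]; last by left; rewrite -[in LHS]Ev vertex_atK.
right; have red_br := address_reduced u; rewrite Eu in red_br.
have [_ col] := vertex_at_cons red_br.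
rewrite Eu Ev (vertex_atK (reduced_behead red_br)); congr (_ :: _).
by rewrite -[LHS]col -Eu addressK.
Qed.

Lemma is_inl_lam0 : is_inl lam0 = false.
Proof.
case E: lam0 => [x|//]; have [w v0w _] := arc_inl x v0X.
have := is_inl_colour (adj_sym v0w); rewrite lam0P ?E; last exact: adj_sym.
by move=> /esym inXw; have := adj_inX_neq v0w; rewrite v0X inXw => /(_ erefl).
Qed.

Definition parent_of u v := exists a, address v = a :: address u.

Lemma adj_parent_of u v : adj u v <-> parent_of u v \/ parent_of v u.
Proof.
split=> [/address_adj[] E|]; [by left; exists (c u v) | by right; exists (c v u) |].
suff child w w' : parent_of w w' -> adj w w'.
  by case=> [/child|/child/adj_sym].
case=> a E; have := address_reduced w'; rewrite E => /vertex_at_cons[+ _].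
by rewrite -E !addressK.
Qed.

Section Twist.
Variables (x0 : X) (m : X -> X).
Hypotheses (m_inj : injective m) (m_x0 : m x0 = x0).

Definition act_if (b : bool) (a : X + Y) : X + Y :=
  if a is inl x then inl (if b then m x else x) else a.

Lemma is_inl_act_if b a : is_inl (act_if b a) = is_inl a.
Proof. by case: a. Qed.

Lemma act_if_inr b a : is_inl a = false -> act_if b a = a.
Proof. by case: a. Qed.

Lemma act_if_x0 b : act_if b (inl x0) = inl x0.
Proof. by case: b => //=; rewrite m_x0. Qed.

Lemma act_if_inj b : injective (act_if b).
Proof. by move=> [x|y] [x'|y'] //= -[]; case: b => [/m_inj|] ->. Qed.

Lemma act_if_eq_x0 b a : (act_if b a == inl x0) = (a == inl x0).
Proof. by rewrite -{1}(act_if_x0 b) inj_eq //; apply: act_if_inj. Qed.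

(* The switch of [vertex_at r]: [bb j] if the last [x0]-coloured arc of its
   geodesic from [v0] leaves the X-vertex at depth [2 j], [false] if there is
   none. *)
Fixpoint switch (bb : nat -> bool) (r : seq (X + Y)) : bool :=
  if r is a :: r' then (if a == inl x0 then bb (size r')./2 else switch bb r') else false.

Fixpoint twist (bb : nat -> bool) (r : seq (X + Y)) : seq (X + Y) :=
  if r is a :: r' then act_if (switch bb r') a :: twist bb r' else [::].

Variable bb : nat -> bool.

Lemma size_twist r : size (twist bb r) = size r.
Proof. by elim: r => //= a r ->. Qed.

Lemma switch_twist r : switch bb (twist bb r) = switch bb r.
Proof. by elim: r => //= a r IH; rewrite act_if_eq_x0 size_twist IH. Qed.

Lemma act_if_switch_cons a r : act_if (switch bb (a :: r)) a = act_if (switch bb r) a.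
Proof. by rewrite /=; case: eqP => [->|]; rewrite ?act_if_x0. Qed.

Lemma reduced_twist r : reduced r -> reduced (twist bb r).
Proof.
elim: r => [|a r IH] //= [red_r side nb]; split; first exact: IH.
  by rewrite is_inl_act_if size_twist.
case: r red_r side nb {IH} => [|b [|d r]] //= red_r side nb.
  by rewrite act_if_inr ?side.
case: red_r => [[_ side_d _] side_b _].
rewrite -act_if_switch_cons.
case: eqP => [b_x0|_]; last by apply: contra_not nb; apply: act_if_inj.
have odd_r : odd (size r) by move: side_b; rewrite b_x0 negbK.
by rewrite !act_if_inr // ?side ?side_d odd_r.
Qed.

Lemma twist_inj : injective (twist bb).
Proof.
by elim=> [|a r IH] [|a' r'] //= [Ea /IH Er]; move: Ea; rewrite Er => /act_if_inj ->.
Qed.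

Lemma in_colour_twist e r : reduced (e :: r) ->
  in_colour (twist bb r) = act_if (switch bb (e :: r)) (in_colour r).
Proof.
case: r => [|d r] [red_r side_e _]; first by rewrite act_if_inr // is_inl_lam0.
rewrite /= -act_if_switch_cons; case: eqP => [e_x0|_] //.
have odd_r : odd (size r) by move: side_e; rewrite e_x0 /= negbK.
by case: red_r => _ side_d _; rewrite !act_if_inr // side_d odd_r.
Qed.

Definition twist_aut (v : V) : V := vertex_at (twist bb (address v)).

Lemma address_twist_aut v : address (twist_aut v) = twist bb (address v).
Proof. by rewrite vertex_atK //; apply/reduced_twist/address_reduced. Qed.

Lemma twist_aut_inX v : inX (twist_aut v) = inX v.
Proof.
rewrite -{2}(addressK v) !inX_vertex_at ?size_twist //; last exact: address_reduced.
exact/reduced_twist/address_reduced.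
Qed.

Lemma twist_aut_parent_of u v : parent_of u v <-> parent_of (twist_aut u) (twist_aut v).
Proof.
rewrite /parent_of !address_twist_aut; split=> [[a ->]|[a]]; first by eexists.
by case: (address v) => [|b s] //= [_ /twist_inj ->]; exists b.
Qed.

Lemma twist_aut_adj u v : adj u v <-> adj (twist_aut u) (twist_aut v).
Proof. by rewrite !adj_parent_of -!twist_aut_parent_of. Qed.

Lemma twist_aut_colour v z : adj v z ->
  c (twist_aut v) (twist_aut z) = act_if (switch bb (address v)) (c v z).
Proof.
move=> vz; have red_tz := reduced_twist (address_reduced z).
case: (address_adj vz) => E.
  by rewrite E in red_tz; have [_ <-] := vertex_at_cons red_tz; rewrite /twist_aut E.
have tvz := proj1 (twist_aut_adj v z) vz.
rewrite (colour_into_vertex_at red_tz tvz) -{2}(addressK z).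
rewrite (colour_into_vertex_at (address_reduced z)) ?addressK //.
by rewrite E (in_colour_twist (e := c z v)) // -E; apply: address_reduced.
Qed.

End Twist.

Lemma twistK x0 m mi bb : cancel m mi -> m x0 = x0 ->
  cancel (twist x0 m bb) (twist x0 mi bb).
Proof.
move=> mK m_x0; elim=> //= a r ->; rewrite (switch_twist (can_inj mK) m_x0).
by congr (_ :: _); case: a => //= x; case: switch; rewrite ?mK.
Qed.

Lemma twist_aut_bij x0 m mi bb : cancel m mi -> cancel mi m -> m x0 = x0 ->
  bijective (twist_aut x0 m bb).
Proof.
move=> mK miK m_x0; have mi_x0 : mi x0 = x0 by rewrite -{1}m_x0 mK.
have m_inj := can_inj mK; have mi_inj := can_inj miK.
by exists (twist_aut x0 mi bb) => v; rewrite {1}/twist_aut address_twist_aut // twistK ?addressK.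
Qed.

Lemma twist_aut_U_c (M : set (X -> X)) (N : set (Y -> Y)) x0 m bb :
  perm_group M -> perm_group N -> M m -> m x0 = x0 ->
  U_c adj inX c M N (twist_aut x0 m bb).
Proof.
move=> [bijM Mid _ _] [_ Nid _ _] Mm m_x0; have [mi mK miK] := bijM m Mm.
have m_inj := can_inj mK; split.
- by split; [exact: twist_aut_bij mK miK m_x0 | exact: twist_aut_adj].
- exact: twist_aut_inX.
- move=> v _; exists (if switch x0 bb (address v) then m else id); first by case: switch.
  by move=> w x vw cx; rewrite twist_aut_colour // cx; case: switch.
- by move=> v _; exists id => // w y vw cy; rewrite twist_aut_colour // cy.
Qed.

Section Distinct.
Variables (x0 x1 : X) (m : X -> X) (y1 y2 : Y).
Hypotheses (m_inj : injective m) (m_x0 : m x0 = x0) (m_x1 : m x1 <> x1) (y12 : y1 <> y2).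

Let x1_x0 : x1 <> x0.
Proof. by move=> E; apply: m_x1; rewrite E m_x0. Qed.

Lemma exists_inl_avoid (l : X + Y) : exists x, x <> x0 /\ inl x <> l.
Proof.
have [<-|] := pselect (inl x1 = l); last by exists x1.
exists (m x1); split; last by case; apply: m_x1.
by rewrite -m_x0 => /m_inj/x1_x0.
Qed.

Lemma exists_inr_avoid (l : X + Y) : exists y : Y, inr y <> l.
Proof. by have [<-|] := pselect (inr y1 = l); [exists y2 => -[/esym] | exists y1]. Qed.

Lemma exists_reduced_x0 j : exists2 s, reduced (inl x0 :: s) & size s = j.*2.
Proof.
elim: j => [|j [s [red_s side_s _] size_s]]; first by exists [::].
have [x [x_x0 x_s]] := exists_inl_avoid (in_colour (behead s)).
have [y y_s] := exists_inr_avoid (in_colour s).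
exists [:: inr y, inl x & s]; last by rewrite /= size_s doubleS.
do !split => //=; rewrite -?side_s //; last by case=> /esym/x_x0.
by case: s {red_s side_s size_s y_s} x_s.
Qed.

Lemma twist_aut_distinct bb bb' : bb <> bb' ->
  (exists v, inX v /\ twist_aut x0 m bb v <> twist_aut x0 m bb' v) /\
  (exists v, ~~ inX v /\ twist_aut x0 m bb v <> twist_aut x0 m bb' v).
Proof.
move=> bb_bb'; have [j bbj] : exists j, bb j <> bb' j.
  by apply/existsNP => eq_bb; apply/bb_bb'/funext.
have [s red_s size_s] := exists_reduced_x0 j.
have [y y_s] := exists_inr_avoid (in_colour s).
have [y' y'_y] := exists_inr_avoid (inr y).
have even_s : odd (size s) = false by rewrite size_s odd_double.
pose r2 := [:: inl x1, inr y, inl x0 & s]; pose r1 := inr y' :: r2.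
have red_r2 : reduced r2 by do !split => //=; rewrite ?even_s //; case=> /x1_x0.
have red_r1 : reduced r1 by do !split => //=; rewrite ?even_s.
have twist_r2 : twist x0 m bb r2 <> twist x0 m bb' r2.
  rewrite /= eqxx size_s doubleK; case=> E _ _; apply: bbj.
  by case: (bb j) (bb' j) E => -[] // E; exfalso; apply: m_x1.
have twist_r1 : twist x0 m bb r1 <> twist x0 m bb' r1.
  by move=> /(congr1 behead)/twist_r2.
have key r : reduced r -> twist x0 m bb r <> twist x0 m bb' r ->
    twist_aut x0 m bb (vertex_at r) <> twist_aut x0 m bb' (vertex_at r).
  by move=> red_r D /(congr1 address); rewrite !address_twist_aut // vertex_atK.
split; [exists (vertex_at r1) | exists (vertex_at r2)]; split; try exact: key.
all: by rewrite inX_vertex_at //= even_s.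
Qed.

End Distinct.
End Addresses.

Lemma exists_root (x : X) (y : Y) :
  exists2 v0, inX v0 & exists lam0, forall u, adj u v0 -> c u v0 = lam0.
Proof.
have [v0 v0X] : exists2 v0, inX v0 & True.
  have [v _] := tree_nonempty; have [vX|vY] := boolP (inX v); first by exists v.
  have [w vw _] := arc_inr y vY; exists w => //.
  by move: (adj_inX_neq vw) vY; case: inX; case: inX.
have [u v0u _] := arc_inl x v0X.
by exists v0 => //; exists (c u v0) => u' u'v0; apply: colour_into_const (adj_sym v0u).
Qed.

Lemma countable_vertices (x : X) (y : Y) : exists f : V -> nat, injective f.
Proof.
have [v0 v0X [lam0 lam0P]] := exists_root x y.
exists (fun v => pickle (address v0X lam0P v)) => v v' /(pcan_inj pickleK) E.
by rewrite -(addressK v0X lam0P v) E addressK.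
Qed.

Lemma exists_aut_family (M : set (X -> X)) (N : set (Y -> Y)) m x0 x1 (y1 y2 : Y) :
  perm_group M -> perm_group N -> M m -> m x0 = x0 -> m x1 <> x1 -> y1 <> y2 ->
  exists G : (nat -> bool) -> V -> V, (forall bb, U_c adj inX c M N (G bb)) /\
    forall bb bb', bb <> bb' ->
      (exists v, inX v /\ G bb v <> G bb' v) /\ (exists v, ~~ inX v /\ G bb v <> G bb' v).
Proof.
move=> HM HN Mm m_x0 m_x1 y12; have [v0 v0X [lam0 lam0P]] := exists_root x0 y1.
have [bijM _ _ _] := HM; have [mi mK _] := bijM m Mm.
exists (twist_aut v0X lam0P x0 m); split; first by move=> bb; apply: twist_aut_U_c.
exact: (twist_aut_distinct v0X lam0P (can_inj mK) m_x0 m_x1 y12).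
Qed.

Section Rigidity.
Variables (M : set (X -> X)) (N : set (Y -> Y)) (g g' : V -> V).
Hypotheses (HM : perm_group M) (HN : perm_group N).
Hypotheses (SM : semiregular M) (SN : semiregular N).
Hypotheses (Ug : U_c adj inX c M N g) (Ug' : U_c adj inX c M N g').

Lemma U_c_agree_nbr a b : adj a b -> g a = g' a -> g b = g' b ->
  forall z, adj a z -> g z = g' z.
Proof.
move=> ab Ea Eb z az.
have [[_ aut] _ UX UY] := Ug; have [[_ aut'] _ UX' UY'] := Ug'.
apply: (colour_inj (proj1 (aut a z) az)); first by rewrite Ea; apply/(aut' a z).
have [aX|aY] := boolP (inX a).
- have [[k Mk colk] [k' Mk' colk']] := (UX a aX, UX' a aX).
  have [[xb cb] [xz cz]] := (colour_inl aX ab, colour_inl aX az).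
  have kk' : k = k'.
    apply: semiregular_eq (xb) HM SM Mk Mk' _.
    by move: (colk b xb ab cb); rewrite Ea Eb (colk' b xb ab cb) => -[].
  by rewrite (colk z xz az cz) Ea (colk' z xz az cz) kk'.
- have [[k Nk colk] [k' Nk' colk']] := (UY a aY, UY' a aY).
  have [[yb cb] [yz cz]] := (colour_inr aY ab, colour_inr aY az).
  have kk' : k = k'.
    apply: semiregular_eq (yb) HN SN Nk Nk' _.
    by move: (colk b yb ab cb); rewrite Ea Eb (colk' b yb ab cb) => -[].
  by rewrite (colk z yz az cz) Ea (colk' z yz az cz) kk'.
Qed.

Lemma U_c_agree_edge a b : adj a b -> g a = g' a -> g b = g' b -> g = g'.
Proof.
move=> ab Ea Eb; apply/funext => v; have [p [walk <-]] := tree_connected a v.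
elim: p a b ab Ea Eb walk => [|z p IH] a b ab Ea Eb //= [az walk].
exact: IH (adj_sym az) (U_c_agree_nbr ab Ea Eb az) Ea walk.
Qed.

End Rigidity.
End LegalTree.

Definition swap_sum (A B : Type) (s : A + B) : B + A :=
  match s with inl a => inr a | inr b => inl b end.

Lemma swap_sum_inj (A B : Type) : injective (@swap_sum A B).
Proof. by case=> [a|b] [a'|b'] //= [->]. Qed.

Lemma legal_swap (X Y : countType) (V : Type) (adj : V -> V -> Prop) (inX : V -> bool)
    (c : V -> V -> X + Y) :
  legal_coloured_biregular_tree adj inX c ->
  legal_coloured_biregular_tree adj (fun v => ~~ inX v) (fun u v => swap_sum (c u v)).
Proof.
case=> tree bip HX HY const; split => //.
- by move=> u v /bip; case: (inX u); case: (inX v).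
- move=> v /HY[col inj onto]; split.
  + by move=> w /col[y ->]; exists y.
  + by move=> w w' vw vw' /swap_sum_inj; apply: inj.
  + by move=> y; have [w vw E] := onto y; exists w; rewrite // E.
- move=> v; rewrite negbK => /HX[col inj onto]; split.
  + by move=> w /col[x ->]; exists x.
  + by move=> w w' vw vw' /swap_sum_inj; apply: inj.
  + by move=> x; have [w vw E] := onto x; exists w; rewrite // E.
- by move=> v u u' uv u'v; rewrite (const v u u').
Qed.

Lemma U_c_swap (X Y : countType) (V : Type) (adj : V -> V -> Prop) (inX : V -> bool)
    (c : V -> V -> X + Y) (M : set (X -> X)) (N : set (Y -> Y)) g :
  U_c adj (fun v => ~~ inX v) (fun u v => swap_sum (c u v)) N M g -> U_c adj inX c M N g.
Proof.
case=> aut side UY UX; split => //.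
- by move=> v; move: (side v); case: (inX v); case: (inX (g v)).
- move=> v vX; have [m Mm colm] := UX v (etrans (negbK _) vX).
  by exists m => // w x vw cx; apply: swap_sum_inj; rewrite /= (colm w x) // cx.
- move=> v vY; have [n Nn coln] := UY v vY.
  by exists n => // w y vw cy; apply: swap_sum_inj; rewrite /= (coln w y) // cy.
Qed.

Lemma not_semiregularP (Z : Type) (K : set (Z -> Z)) : ~ semiregular K ->
  exists2 k, K k & exists z0 z1, k z0 = z0 /\ k z1 <> z1.
Proof.
move=> nSK; apply: contrapT => noK; apply: nSK => k Kk z kz; apply/funext => z1.
by apply: contrapT => kz1; apply: noK; exists k => //; exists z, z1.
Qed.

Lemma uncountable_nat_bool : ~ countable [set: nat -> bool].
Proof.
move=> /countable_injP[f f_inj].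
pose g n : nat -> bool :=
  if pselect (exists b, f b = n) is left H then projT1 (cid H) else xpredT.
have gK b : g (f b) = b.
  rewrite /g; case: pselect => [H|[]]; last by exists b.
  by case: cid => b' /= /f_inj; apply; rewrite inE.
pose d n := ~~ g n n.
by have /(congr1 (@^~ (f d))) := gK d; rewrite /d; case: (g _ _).
Qed.

Section BoxProductCardinality.
Variables (X Y : countType) (V : Type) (adj : V -> V -> Prop) (inX : V -> bool)
  (c : V -> V -> X + Y) (M : set (X -> X)) (N : set (Y -> Y)).

Lemma box_product_le_continuum (f : V -> nat) : injective f ->
  box_product adj inX c M N #<= [set: nat -> bool].
Proof.
move=> f_inj; apply/pcard_injP.
exists (fun h n => `[< exists v : VY inX, pickle (f (sval v), f (sval (h v))) = n >]).
move=> h h' _ _ E; apply/funext => v; apply: val_inj.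
have := congr1 (@^~ (pickle (f (sval v), f (sval (h v))))) E.
rewrite (_ : `[< _ >] = true) /=; last by apply/asboolP; exists v.
move=> /esym /asboolP[v' /(pcan_inj pickleK)[/f_inj /val_inj -> /f_inj]] //.
Qed.

Definition restrict_VY (g : V -> V) (v : VY inX) : VY inX :=
  if pselect (~~ inX (g (sval v))) is left H then exist _ (g (sval v)) H else v.

Lemma restrict_VYE g : (forall v, inX (g v) = inX v) ->
  forall v, sval (restrict_VY g v) = g (sval v).
Proof.
move=> side v; rewrite /restrict_VY; case: pselect => // -[].
by rewrite side; apply: (svalP v).
Qed.

Lemma continuum_le_box_product_of_family (G : (nat -> bool) -> V -> V) :
  (forall bb, U_c adj inX c M N (G bb)) ->
  (forall bb bb', bb <> bb' -> exists v, ~~ inX v /\ G bb v <> G bb' v) ->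
  [set: nat -> bool] #<= box_product adj inX c M N.
Proof.
move=> UG G_inj; have side bb : forall v, inX (G bb v) = inX v by case: (UG bb).
pose F bb := restrict_VY (G bb).
have F_inj : {in [set: nat -> bool] &, injective F}.
  move=> bb bb' _ _ E; apply: contrapT => /G_inj[v [vY]]; apply.
  have := congr1 (fun h => sval (h (exist _ v vY))) E.
  by rewrite /F /= !restrict_VYE.
have F_box : F @` [set: nat -> bool] `<=` box_product adj inX c M N.
  by move=> h [bb _ <-]; exists (G bb) => // v; rewrite /F restrict_VYE.
apply: card_le_trans (subset_card_le F_box).
by have /card_eqPle[] := card_esym (inj_card_eq F_inj).
Qed.

End BoxProductCardinality.

Section Dichotomy.
Variables (X Y : countType) (V : Type) (adj : V -> V -> Prop) (inX : V -> bool)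
  (c : V -> V -> X + Y) (M : set (X -> X)) (N : set (Y -> Y)).
Hypotheses (legal : legal_coloured_biregular_tree adj inX c)
  (HM : perm_group M) (HN : perm_group N).

Lemma box_product_countable (x : X) (y : Y) :
  semiregular M -> semiregular N -> countable (box_product adj inX c M N).
Proof.
move=> SM SN; have [f f_inj] := countable_vertices legal x y.
have [v0 v0X _] := exists_root legal x y; have [w0 v0w0 _] := arc_inl legal x v0X.
apply/countable_injP.
pose F h := if pselect (box_product adj inX c M N h) is left H
  then let g := s2val (cid2 H) in pickle (f (g v0), f (g w0)) else 0%N.
exists F => h h'; rewrite !inE /F => Hh Hh'.
case: pselect => // H; case: pselect => // H'.
case: (cid2 H) => g Ug Eg; case: (cid2 H') => g' Ug' Eg' /=.
move=> /(pcan_inj pickleK)[/f_inj E0 /f_inj E1].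
have gg' := U_c_agree_edge legal HM HN SM SN Ug Ug' v0w0 E0 E1.
by apply/funext => v; apply: val_inj; rewrite /= Eg Eg' gg'.
Qed.

Lemma continuum_le_box_product (x1 x2 : X) (y1 y2 : Y) : x1 <> x2 -> y1 <> y2 ->
  ~ (semiregular M /\ semiregular N) ->
  [set: nat -> bool] #<= box_product adj inX c M N.
Proof.
move=> x12 y12 nS; have [SM|/not_semiregularP[m Mm [x0 [x [m_x0 m_x]]]]] := pselect (semiregular M).
  have /not_semiregularP[n Nn [y0 [y [n_y0 n_y]]]] : ~ semiregular N by move=> SN; apply: nS.
  have [G [UG G_inj]] := exists_aut_family (legal_swap legal) HN HM Nn n_y0 n_y x12.
  apply: (continuum_le_box_product_of_family (G := G)) => [bb|bb bb' /G_inj[]//].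
  exact: U_c_swap.
have [G [UG G_inj]] := exists_aut_family legal HM HN Mm m_x0 m_x y12.
by apply: (continuum_le_box_product_of_family (G := G)) => // bb bb' /G_inj[].
Qed.

End Dichotomy.

Theorem corollary6p5 (X Y : countType) (V : Type)
  (adj : V -> V -> Prop) (inX : V -> bool) (c : V -> V -> X + Y)
  (M : set (X -> X)) (N : set (Y -> Y)) :
  (exists x1 x2 : X, x1 <> x2) ->
  (exists y1 y2 : Y, y1 <> y2) ->
  legal_coloured_biregular_tree adj inX c ->
  perm_group M -> perm_closed M -> nontrivial_group M ->
  perm_group N -> perm_closed N -> nontrivial_group N ->
  (countable (box_product adj inX c M N) \/
   box_product adj inX c M N #= [set: nat -> bool]) /\
  (countable (box_product adj inX c M N) <-> semiregular M /\ semiregular N).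
Proof.
move=> [x1 [x2 x12]] [y1 [y2 y12]] legal HM _ _ HN _ _.
have [[SM SN]|nS] := pselect (semiregular M /\ semiregular N).
  have box_cnt := box_product_countable legal HM HN x1 y1 SM SN.
  by split; [left | split].
have [f f_inj] := countable_vertices legal x1 y1.
have le_cont := box_product_le_continuum adj inX c M N f_inj.
have ge_cont := continuum_le_box_product legal HM HN x12 y12 nS.
split; first by right; apply: Cantor_Bernstein.
by split=> // box_cnt; case: uncountable_nat_bool; apply: card_le_trans ge_cont box_cnt.
Qed.
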